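(* Let $\mathsf{A}=\{A_1,\ldots,A_\ell\}$ be a finite set of $d \times d$ matrices over $\mathbb{C}$, and let $\mathsf{R} \subseteq \mathsf{A}$ be the set of all elements of $\mathsf{A}$ which have rank greater than or equal to two. Suppose that either $\mathsf{R}$ is empty or $\varrho(\mathsf{R})<\varrho(\mathsf{A})$. Then there exist an integer $n \geq 1$ and indices $i_1,\ldots,i_n \in \{1,\ldots,\ell\}$ such that each element of $\mathsf{A}$ of rank exactly one appears at most once in the sequence $A_{i_1},\ldots,A_{i_n}$, and \[\varrho(\mathsf{A})=\rho(A_{i_1}\cdots A_{i_n})^{1/n}.\]
   Context: For a square matrix $A$, $\rho(A)$ denotes its ordinary spectral radius. For a nonempty bounded set $\mathsf{A}$ of $d\times d$ complex matrices, the joint spectral radius is \[\varrho(\mathsf{A})=\lim_{n \to \infty} \sup\left\{\left\|A_{i_n} \cdots A_{i_1}\right\|^{1/n} \colon A_{i_j} \in \mathsf{A}\right\},\] where $\|\cdot\|$ is any matrix norm (the limit exists and is independent of the norm). *)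

From HB Require Import structures.
From mathcomp Require Import all_boot all_order all_algebra.
From mathcomp Require Import all_classical all_reals all_analysis.
From mathcomp Require Import complex.

Set Implicit Arguments.
Unset Strict Implicit.
Unset Printing Implicit Defensive.

Import Order.TTheory GRing.Theory Num.Theory.
Import numFieldNormedType.Exports.
Local Open Scope ring_scope.
Local Open Scope classical_set_scope.

Definition cabs (R : realType) (z : R[i]) : R := ComplexField.Normc.normc z.

(* Ordinary spectral radius: the supremum (= maximum, the set is finite)
   of the moduli of the eigenvalues of A (0 if d = 0). *)
Definition specrad (R : realType) (d : nat) (A : 'M[R[i]]_d) : R :=
  sup [set cabs a | a in [set a : R[i] | eigenvalue A a]].

(* A fixed matrix norm: the maximal absolute row sum (operator infinity norm).
   The joint spectral radius does not depend on the chosen norm. *)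
Definition mxnorm (R : realType) (d : nat) (A : 'M[R[i]]_d) : R :=
  \big[Num.max/0]_(i < d) \sum_(j < d) cabs (A i j).

Definition mxprod (R : realType) (d : nat) (s : seq 'M[R[i]]_d) : 'M[R[i]]_d :=
  foldr (fun M N => M *m N) 1%:M s.

Definition jsr_n (R : realType) (d : nat) (S : seq 'M[R[i]]_d) (n : nat) : R :=
  \big[Num.max/0]_(t : n.-tuple 'I_(size S))
     (mxnorm (mxprod [seq nth 0 S (nat_of_ord k) | k <- tval t])) `^ (n%:R^-1).

Definition jsr (R : realType) (d : nat) (S : seq 'M[R[i]]_d) : R :=
  limn (jsr_n S).

(* A product P of n letters always satisfies rho(P)^(1/n) <= jsr(A), so it is enough to
   find an extremal product in which every rank-one letter occurs at most once.  Suppose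
   there is none, and pick c strictly between jsr(R) and jsr(A).  Products without rank-one
   letters consist of zero matrices or elements of R, so they grow like K c^n; a product in
   which each rank-one letter occurs at most once has at most |A| rank-one letters, so it
   grows like K' c^n as well.  In an arbitrary product, a return B Y B of a rank-one letter
   B equals k B, where k is an eigenvalue of the product Y B, in which each rank-one letter
   occurs at most once; hence |k| <= g^(|Y|+1) for some g < jsr(A) (the norm bound handles
   long returns, and there are finitely many short ones, each strictly subextremal).
   Collapsing returns bounds every product of length n by K' g^n, so jsr(A) <= g. *)

From HB Require Import structures.
From mathcomp Require Import all_boot all_order all_algebra.
From mathcomp Require Import all_classical all_reals all_analysis.
From mathcomp Require Import complex.
From mathcomp Require Import ring lra zify.

Import Order.TTheory GRing.Theory Num.Theory.
Local Open Scope ring_scope.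

Set Implicit Arguments.
Unset Strict Implicit.
Unset Printing Implicit Defensive.

Section MatrixNorm.
Variable R : realType.

Lemma cabs_ge0 (z : R[i]) : 0 <= cabs z.
Proof. by case: z => a b; exact: sqrtr_ge0. Qed.

Lemma cabs0 : cabs (0 : R[i]) = 0.
Proof. exact: ComplexField.Normc.normc0. Qed.

Lemma cabsM (x y : R[i]) : cabs (x * y) = cabs x * cabs y.
Proof. exact: ComplexField.Normc.normcM. Qed.

Lemma cabsX (z : R[i]) n : cabs (z ^+ n) = cabs z ^+ n.
Proof.
elim: n => [|n IH]; first exact: ComplexField.Normc.normc1.
by rewrite !exprS cabsM IH.
Qed.

Lemma cabs_sum (I : Type) (r : seq I) (P : pred I) (F : I -> R[i]) :
  cabs (\sum_(i <- r | P i) F i) <= \sum_(i <- r | P i) cabs (F i).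
Proof.
elim/big_ind2: _ => [|x1 x2 y1 y2 h1 h2|//]; first by rewrite cabs0.
exact: le_trans (le_normcD _ _) (lerD h1 h2).
Qed.

Variable d : nat.
Local Notation M := 'M[R[i]]_d.

Definition rownorm (A : M) i := \sum_(j < d) cabs (A i j).

Lemma mxnorm_ge0 (A : M) : 0 <= mxnorm A.
Proof.
rewrite /mxnorm; elim/big_ind: _ => // [x y hx hy|i _]; first by rewrite le_max hx.
by apply: sumr_ge0 => j _; exact: cabs_ge0.
Qed.

Lemma rownorm_le_mxnorm (A : M) i : rownorm A i <= mxnorm A.
Proof. exact: (le_bigmax _ (fun i => rownorm A i)). Qed.

Lemma mxnorm_le (A : M) b : 0 <= b -> (forall i, rownorm A i <= b) -> mxnorm A <= b.
Proof. by move=> b0 hA; apply: bigmax_le => // i _; exact: hA. Qed.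

Lemma mxnormM (A B : M) : mxnorm (A *m B) <= mxnorm A * mxnorm B.
Proof.
apply: mxnorm_le => [|i]; first by rewrite mulr_ge0 ?mxnorm_ge0.
apply: (@le_trans _ _ (\sum_(j < d) \sum_(k < d) cabs (A i k) * cabs (B k j))).
  apply: ler_sum => j _; rewrite mxE; apply: le_trans (cabs_sum _ _ _) _.
  by apply: ler_sum => k _; rewrite cabsM.
rewrite exchange_big /=.
apply: (@le_trans _ _ (\sum_(k < d) cabs (A i k) * mxnorm B)).
  apply: ler_sum => k _; rewrite -mulr_sumr.
  by apply: ler_wpM2l; [exact: cabs_ge0 | exact: rownorm_le_mxnorm].
rewrite -mulr_suml; apply: ler_wpM2r; first exact: mxnorm_ge0.
exact: rownorm_le_mxnorm.
Qed.

Lemma mxnormZ (a : R[i]) (A : M) : mxnorm (a *: A) <= cabs a * mxnorm A.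
Proof.
apply: mxnorm_le => [|i]; first by rewrite mulr_ge0 ?mxnorm_ge0 ?cabs_ge0.
rewrite /rownorm; under eq_bigr do rewrite mxE cabsM.
rewrite -mulr_sumr; apply: ler_wpM2l; first exact: cabs_ge0.
exact: rownorm_le_mxnorm.
Qed.

Lemma mxnorm0 : mxnorm (0 : M) = 0.
Proof.
apply/eqP; rewrite eq_le mxnorm_ge0 andbT; apply: mxnorm_le => // i.
by rewrite /rownorm big1 // => j _; rewrite mxE cabs0.
Qed.

Definition rvnorm (x : 'rV[R[i]]_d) := \sum_(j < d) cabs (x 0 j).

Lemma rvnormM (x : 'rV[R[i]]_d) (A : M) : rvnorm (x *m A) <= rvnorm x * mxnorm A.
Proof.
apply: (@le_trans _ _ (\sum_(j < d) \sum_(k < d) cabs (x 0 k) * cabs (A k j))).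
  apply: ler_sum => j _; rewrite mxE; apply: le_trans (cabs_sum _ _ _) _.
  by apply: ler_sum => k _; rewrite cabsM.
rewrite exchange_big /= mulr_suml; apply: ler_sum => k _; rewrite -mulr_sumr.
by apply: ler_wpM2l; [exact: cabs_ge0 | exact: rownorm_le_mxnorm].
Qed.

Lemma rvnormZ (a : R[i]) x : rvnorm (a *: x) = cabs a * rvnorm x.
Proof. by rewrite /rvnorm mulr_sumr; apply: eq_bigr => j _; rewrite mxE cabsM. Qed.

Lemma rvnorm_gt0 (x : 'rV[R[i]]_d) : x != 0 -> 0 < rvnorm x.
Proof.
move=> x0; rewrite lt_def sumr_ge0 ?andbT => [|j _]; last exact: cabs_ge0.
rewrite psumr_eq0 => [|j _]; last exact: cabs_ge0.
apply: contra x0 => /allP x0; apply/eqP/rowP => j; rewrite mxE.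
by apply: ComplexField.Normc.eq0_normc; apply/eqP/x0; exact: mem_index_enum.
Qed.

Lemma eigenvalue_le_mxnorm (A : M) a : eigenvalue A a -> cabs a <= mxnorm A.
Proof.
move=> /eigenvalueP [x xA x0]; have := rvnormM x A.
by rewrite xA rvnormZ mulrC ler_pM2l // rvnorm_gt0.
Qed.

End MatrixNorm.

Section Words.
Variables (R : realType) (d : nat).
Local Notation M := 'M[R[i]]_d.
Implicit Types (S w : seq M).

Lemma mxprod_cat (w1 w2 : seq M) : mxprod (w1 ++ w2) = mxprod w1 *m mxprod w2.
Proof. by elim: w1 => [|A w1 IH] /=; rewrite ?mul1mx // IH mulmxA. Qed.

Lemma mxprod_rcons (w : seq M) B : mxprod (rcons w B) = mxprod w *m B.
Proof. by rewrite -cats1 mxprod_cat /= mulmx1. Qed.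

Lemma mxprod_eq0 (w : seq M) : 0 \in w -> mxprod w = 0.
Proof.
elim: w => //= A w IH; rewrite inE => /orP [/eqP <-|/IH ->].
  by rewrite mul0mx.
by rewrite mulmx0.
Qed.

Definition letters S n (t : n.-tuple 'I_(size S)) := [seq nth 0 S (nat_of_ord k) | k <- tval t].

Definition maxnorm S n := \big[Num.max/0]_(t : n.-tuple 'I_(size S)) mxnorm (mxprod (letters t)).

Definition words S n := [seq letters t | t <- enum {: n.-tuple 'I_(size S)}].

Lemma letters_sub S n (t : n.-tuple 'I_(size S)) : all (mem S) (letters t).
Proof. by apply/allP => _ /mapP [k _ ->]; exact: mem_nth. Qed.

Lemma size_letters S n (t : n.-tuple 'I_(size S)) : size (letters t) = n.
Proof. by rewrite size_map size_tuple. Qed.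

Lemma lettersP S w : all (mem S) w -> exists t : (size w).-tuple 'I_(size S), letters t = w.
Proof.
elim: w => [|A w IH] /= => [_|/andP [AS /IH [t tw]]]; first by exists [tuple].
have iA : (index A S < size S)%N by rewrite index_mem.
exists [tuple of Ordinal iA :: t]; rewrite /letters /=.
by congr (_ :: _); [exact: nth_index | exact: tw].
Qed.

Lemma mem_words S w : all (mem S) w -> w \in words S (size w).
Proof.
by move=> /lettersP [t tw]; rewrite -[X in X \in _]tw; apply: map_f; rewrite mem_enum.
Qed.

Lemma wordsP S n w : w \in words S n -> all (mem S) w /\ size w = n.
Proof. by move=> /mapP [t _ ->]; rewrite letters_sub size_letters. Qed.

Lemma maxnorm_ge0 S n : 0 <= maxnorm S n.
Proof.
rewrite /maxnorm; elim/big_ind: _ => // [x y hx hy|t _]; first by rewrite le_max hx.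
exact: mxnorm_ge0.
Qed.

Lemma mxnorm_le_maxnorm S w : all (mem S) w -> mxnorm (mxprod w) <= maxnorm S (size w).
Proof. by move=> /lettersP [t <-]; rewrite size_letters; exact: le_bigmax. Qed.

Lemma maxnorm_le S n b : 0 <= b ->
  (forall w, all (mem S) w -> size w = n -> mxnorm (mxprod w) <= b) -> maxnorm S n <= b.
Proof.
move=> b0 hS; apply: bigmax_le => // t _.
by apply: hS; [exact: letters_sub | exact: size_letters].
Qed.

Lemma maxnormD S m n : maxnorm S (m + n) <= maxnorm S m * maxnorm S n.
Proof.
apply: maxnorm_le => [|w wS sw]; first by rewrite mulr_ge0 ?maxnorm_ge0.
move: wS; rewrite -(cat_take_drop m w) all_cat mxprod_cat => /andP [w1S w2S].
apply: le_trans (mxnormM _ _) (ler_pM (mxnorm_ge0 _) (mxnorm_ge0 _) _ _).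
- by have := mxnorm_le_maxnorm w1S; rewrite size_takel // sw leq_addr.
- by have := mxnorm_le_maxnorm w2S; rewrite size_drop sw addKn.
Qed.

Lemma jsr_nE S n : (0 < n)%N -> jsr_n S n = maxnorm S n `^ n%:R^-1.
Proof.
move=> n_gt0; set e := n%:R^-1.
have e_gt0 : 0 < e by rewrite invr_gt0 ltr0n.
suff [] : jsr_n S n = maxnorm S n `^ e /\ 0 <= maxnorm S n by [].
rewrite /jsr_n /maxnorm.
apply: (big_ind2 (fun y x => y = x `^ e /\ 0 <= x)).
- by rewrite powR0 // gt_eqF.
- move=> y1 x1 y2 x2 [-> x1_ge0] [-> x2_ge0]; split; last by rewrite le_max x1_ge0.
  have e_ge0 := ltW e_gt0.
  have [x12|x21] := leP x1 x2; first by rewrite max_r //; exact: ge0_ler_powR.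
  by rewrite max_l //; apply: ge0_ler_powR => //; exact: ltW.
- by split; [|exact: mxnorm_ge0].
Qed.

End Words.

Lemma ler_term_sum (R : numDomainType) (I : eqType) (r : seq I) (F : I -> R) i :
  (forall j, 0 <= F j) -> i \in r -> F i <= \sum_(j <- r) F j.
Proof.
move=> F_ge0; elim: r => //= j r IH; rewrite inE big_cons => /orP [/eqP ->|ir].
  by rewrite lerDl sumr_ge0.
by apply: le_trans (IH ir) _; rewrite lerDr.
Qed.

Section RealFacts.
Variable R : realType.

Lemma exprn_powR_inv (x : R) n : 0 <= x -> (0 < n)%N -> (x `^ n%:R^-1) ^+ n = x.
Proof.
move=> x_ge0 n_gt0; rewrite -powR_mulrn ?powR_ge0 // -powRrM mulVf ?powRr1 //.
by rewrite pnatr_eq0 -lt0n.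
Qed.

Lemma powR_exprn_inv (x : R) n : 0 <= x -> (0 < n)%N -> (x ^+ n) `^ n%:R^-1 = x.
Proof.
move=> x_ge0 n_gt0; rewrite -powR_mulrn // -powRrM mulfV ?powRr1 //.
by rewrite pnatr_eq0 -lt0n.
Qed.

Lemma eventually_expr_dominates (a b K : R) : 0 <= a -> a < b ->
  exists N, forall q, (N <= q)%N -> a ^+ q * K <= b ^+ q.
Proof.
move=> a_ge0 ab; have b_gt0 : 0 < b by apply: le_lt_trans ab.
have ab1 : `|a / b| < 1.
  by rewrite ger0_norm ?divr_ge0 ?(ltW b_gt0) // ltr_pdivrMr // mul1r.
have K1 : 0 < `|K| + 1 by rewrite ltr_wpDl.
have [N _ hN] : \forall q \near \oo%classic, `|(a / b) ^+ q| <= (`|K| + 1)^-1.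
  by apply: cvgr0_norm_le; [exact: cvg_expr | rewrite invr_gt0].
exists N => q /hN /= /(le_trans (ler_norm _)).
rewrite exprMn exprVn ler_pdivrMr ?exprn_gt0 // => h.
rewrite mulrC ler_pdivlMr // in h.
apply: le_trans h; apply: ler_wpM2l; first exact: exprn_ge0.
by apply: le_trans (ler_norm K) _; rewrite lerDl.
Qed.

End RealFacts.

Section Fekete.
Variables (R : realType) (f : nat -> R).
Hypothesis f_ge0 : forall m, 0 <= f m.
Hypothesis f_submul : forall m n, f (m + n)%N <= f m * f n.

Lemma submul_eventually_le k (c0 c : R) : (0 < k)%N -> 0 <= c0 -> c0 < c ->
  f k <= c0 ^+ k -> exists N, forall m, (N <= m)%N -> f m <= c ^+ m.
Proof.
move=> k_gt0 c0_ge0 c0c fk; have c_gt0 : 0 < c by apply: le_lt_trans c0c.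
set B := 1 + \sum_(r < k) f r.
have f_le_B r : (r < k)%N -> f r <= B.
  move=> rk; apply: ler_wpDl => //.
  exact: ler_term_sum (fun r : 'I_k => f_ge0 r) (mem_index_enum (Ordinal rk)).
have f_qk q r : f (q * k + r)%N <= (c0 ^+ k) ^+ q * f r.
  elim: q => [|q IH]; first by rewrite mul0n add0n expr0 mul1r.
  rewrite mulSn -addnA; apply: le_trans (f_submul _ _) _.
  by rewrite exprS -mulrA; apply: ler_pM; rewrite ?exprn_ge0.
(* [m0 <= c ^+ r] for every [r < k]. *)
set m0 := Num.min 1 c ^+ k.
have min_gt0 : 0 < Num.min 1 c by rewrite lt_min ltr01.
have min_le1 : Num.min 1 c <= 1 by rewrite ge_min lexx.
have min_lec : Num.min 1 c <= c by rewrite ge_min lexx orbT.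
have m0_gt0 : 0 < m0 by rewrite exprn_gt0.
have ck : c0 ^+ k < c ^+ k by rewrite ltrXn2r // -lt0n.
have [Q hQ] := eventually_expr_dominates (B / m0) (exprn_ge0 k c0_ge0) ck.
exists (Q * k)%N => m Qm; rewrite (divn_eq m k).
set q := (m %/ k)%N; set r := (m %% k)%N.
have rk : (r < k)%N by rewrite ltn_mod.
have Qq : (Q <= q)%N by rewrite /q -(mulnK Q k_gt0) leq_div2r.
apply: le_trans (f_qk q r) _.
apply: le_trans (ler_wpM2l (exprn_ge0 _ (exprn_ge0 _ c0_ge0)) (f_le_B r rk)) _.
apply: (@le_trans _ _ ((c ^+ k) ^+ q * m0)).
  by move: (hQ q Qq); rewrite mulrA -ler_pdivlMr ?invr_gt0 // invrK.
rewrite exprD -exprM mulnC; apply: ler_wpM2l; first by rewrite exprn_ge0 // ltW.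
apply: (@le_trans _ _ (Num.min 1 c ^+ r)).
  by apply: ler_wiXn2l => //; [exact: ltW | exact: ltnW].
by apply: lerXn2r; rewrite ?nnegrE ?(ltW min_gt0) ?(ltW c_gt0).
Qed.

End Fekete.

Section JointSpectralRadius.
Variables (R : realType) (d : nat).
Local Notation M := 'M[R[i]]_d.
Variable S : seq M.
Local Open Scope classical_set_scope.

Let rootnorms := [set maxnorm S m `^ m%:R^-1 | m in [set m | (0 < m)%N]].

Let rootnorms_neq0 : rootnorms !=set0.
Proof. by exists (maxnorm S 1 `^ 1%:R^-1); exists 1%N. Qed.

Let rootnorms_lbound : lbound rootnorms 0.
Proof. by move=> _ [m _ <-]; exact: powR_ge0. Qed.

Let rootnorms_has_lbound : has_lbound rootnorms.
Proof. by exists 0; exact: rootnorms_lbound. Qed.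

Let maxnorm_eventually_le_inf c : inf rootnorms < c ->
  exists N, forall m, (N <= m)%N -> maxnorm S m <= c ^+ m.
Proof.
move=> /(inf_lt rootnorms_neq0) [_ [k /= k_gt0 <-] kc].
apply: (submul_eventually_le (@maxnorm_ge0 R d S) (@maxnormD R d S) k_gt0 _ kc).
  exact: powR_ge0.
by rewrite exprn_powR_inv // maxnorm_ge0.
Qed.

Lemma jsrE : jsr S = inf rootnorms.
Proof.
apply: norm_cvg_lim; apply/cvgrPdist_le => e e_gt0.
have [N hN] : exists N, forall m, (N <= m)%N -> maxnorm S m <= (inf rootnorms + e) ^+ m.
  by apply: maxnorm_eventually_le_inf; rewrite ltrDl.
exists N.+1 => // n /= Nn; have n_gt0 : (0 < n)%N by apply: leq_trans Nn.
have inf_le : inf rootnorms <= maxnorm S n `^ n%:R^-1.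
  by apply: (ge_inf rootnorms_has_lbound); exists n.
have le_infDe : maxnorm S n `^ n%:R^-1 <= inf rootnorms + e.
  rewrite -(ler_pXn2r n_gt0) ?nnegrE ?powR_ge0 ?addr_ge0 ?(ltW e_gt0) //.
    by rewrite exprn_powR_inv ?maxnorm_ge0 //; apply: hN; exact: ltnW.
  exact: lb_le_inf rootnorms_neq0 rootnorms_lbound.
rewrite jsr_nE // ler0_norm ?subr_le0 //; lra.
Qed.

Lemma jsr_ge0 : 0 <= jsr S.
Proof. by rewrite jsrE; exact: lb_le_inf rootnorms_neq0 rootnorms_lbound. Qed.

Lemma jsrX_le_maxnorm m : (0 < m)%N -> jsr S ^+ m <= maxnorm S m.
Proof.
move=> m_gt0; rewrite -(exprn_powR_inv (maxnorm_ge0 S m) m_gt0).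
rewrite lerXn2r ?nnegrE ?jsr_ge0 ?powR_ge0 // jsrE.
by apply: (ge_inf rootnorms_has_lbound); exists m.
Qed.

Lemma maxnorm_eventually_le c : jsr S < c ->
  exists N, forall m, (N <= m)%N -> maxnorm S m <= c ^+ m.
Proof. by rewrite jsrE; exact: maxnorm_eventually_le_inf. Qed.

Lemma word_bound_of_gt_jsr c : 0 < c -> jsr S < c -> exists K, 1 <= K /\
  forall w, all (mem S) w -> mxnorm (mxprod w) <= K * c ^+ size w.
Proof.
move=> c_gt0 /maxnorm_eventually_le [N hN].
set F := fun m : 'I_N => maxnorm S m / c ^+ m.
have F_ge0 m : 0 <= F m by rewrite divr_ge0 ?maxnorm_ge0 // exprn_ge0 // ltW.
have K_ge1 : 1 <= 1 + \sum_(m < N) F m by rewrite lerDl sumr_ge0.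
exists (1 + \sum_(m < N) F m); split => // w wS.
apply: le_trans (mxnorm_le_maxnorm wS) _.
have cw_gt0 : 0 < c ^+ size w by rewrite exprn_gt0.
have [Nw|wN] := leqP N (size w).
  by apply: le_trans (hN _ Nw) _; rewrite ler_peMl // ltW.
rewrite -ler_pdivrMr //; apply: ler_wpDl => //.
exact: ler_term_sum F_ge0 (mem_index_enum (Ordinal wN)).
Qed.

Lemma jsr_le_of_word_bound K g : 0 <= K -> 0 < g ->
  (forall w, all (mem S) w -> mxnorm (mxprod w) <= K * g ^+ size w) -> jsr S <= g.
Proof.
move=> K_ge0 g_gt0 hw; rewrite leNgt; apply/negP => g_lt.
have [N hN] := eventually_expr_dominates (K + 1) (ltW g_gt0) g_lt.
have lower := le_trans (hN N.+1 (leqnSn N)) (jsrX_le_maxnorm (ltn0Sn N)).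
have upper : maxnorm S N.+1 <= K * g ^+ N.+1.
  apply: maxnorm_le => [|w wS <-]; last exact: hw.
  by rewrite mulr_ge0 // exprn_ge0 // ltW.
have := exprn_gt0 N.+1 g_gt0; move: lower upper.
set u := g ^+ N.+1; set x := maxnorm S N.+1 => lower upper u_gt0.
nra.
Qed.

End JointSpectralRadius.

Lemma jsr_nil (R : realType) (d : nat) : jsr (Nil 'M[R[i]]_d) = 0.
Proof.
apply/eqP; rewrite eq_le jsr_ge0 andbT.
have := jsrX_le_maxnorm (Nil 'M[R[i]]_d) (ltn0Sn 0); rewrite expr1 => /le_trans; apply.
by apply: maxnorm_le => // -[|B []] //=; rewrite andbT.
Qed.

Section SpectralRadius.
Variables (R : realType) (d : nat).
Local Notation M := 'M[R[i]]_d.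
Local Open Scope classical_set_scope.

Lemma cabs_le_specrad (A : M) a : eigenvalue A a -> cabs a <= specrad A.
Proof.
move=> Aa; apply: ub_le_sup; last by exists a.
by exists (mxnorm A) => _ [b Ab <-]; exact: eigenvalue_le_mxnorm.
Qed.

Lemma specrad_le (A : M) b : 0 <= b -> (forall a, eigenvalue A a -> cabs a <= b) ->
  specrad A <= b.
Proof.
move=> b_ge0 hA; rewrite /specrad.
have [->|/set0P ne] := eqVneq [set cabs a | a in [set a | eigenvalue A a]] set0.
  by rewrite sup0.
by apply: ge_sup => // _ [a Aa <-]; exact: hA.
Qed.

Lemma specrad_ge0 (A : M) : 0 <= specrad A.
Proof.
rewrite /specrad.
have [->|/set0P [_ [a Aa _]]] := eqVneq [set cabs a | a in [set a | eigenvalue A a]] set0.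
  by rewrite sup0.
exact: le_trans (cabs_ge0 a) (cabs_le_specrad Aa).
Qed.

Lemma eigenvector_mxprod_nseq (x : 'rV[R[i]]_d) a (w : seq M) k :
  x *m mxprod w = a *: x -> x *m mxprod (flatten (nseq k w)) = a ^+ k *: x.
Proof.
move=> xw; elim: k => [|k IH] /=; first by rewrite mulmx1 scale1r.
by rewrite mxprod_cat mulmxA xw -scalemxAl IH scalerA exprS.
Qed.

Lemma specrad_mxprod_le_jsr (S w : seq M) : all (mem S) w -> (0 < size w)%N ->
  specrad (mxprod w) <= jsr S ^+ size w.
Proof.
move=> wS n_gt0; set n := size w.
apply: specrad_le => [|a /eigenvalueP [x xw x0]]; first by rewrite exprn_ge0 ?jsr_ge0.
rewrite -(exprn_powR_inv (cabs_ge0 a) n_gt0) lerXn2r ?nnegrE ?powR_ge0 ?jsr_ge0 //.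
apply/ler_addgt0Pr => e e_gt0; set c := jsr S + e.
have c_ge0 : 0 <= c by rewrite addr_ge0 ?jsr_ge0 ?ltW.
have [N hN] : exists N, forall m, (N <= m)%N -> maxnorm S m <= c ^+ m.
  by apply: maxnorm_eventually_le; rewrite ltrDl.
set wk := flatten (nseq N.+1 w).
have wkS : all (mem S) wk by rewrite /wk; elim: N.+1 => //= k IH; rewrite all_cat wS.
have size_wk : size wk = (N.+1 * n)%N.
  by rewrite /wk; elim: N.+1 => //= k IH; rewrite size_cat IH mulSn.
have ak : eigenvalue (mxprod wk) (a ^+ N.+1).
  by apply/eigenvalueP; exists x => //; exact: eigenvector_mxprod_nseq.
have : cabs a ^+ N.+1 <= (c ^+ n) ^+ N.+1.
  rewrite -cabsX -exprM mulnC -size_wk.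
  apply: le_trans (eigenvalue_le_mxnorm ak) (le_trans (mxnorm_le_maxnorm wkS) _).
  by apply: hN; rewrite size_wk; exact: leq_trans (leqnSn N) (leq_pmulr _ n_gt0).
move=> acN; have ac : cabs a <= c ^+ n.
  by rewrite -(ler_pXn2r (ltn0Sn N)) ?nnegrE ?cabs_ge0 ?exprn_ge0.
by rewrite -(ler_pXn2r n_gt0) ?nnegrE ?powR_ge0 // exprn_powR_inv ?cabs_ge0.
Qed.

End SpectralRadius.

Section RankOne.
Variables (R : realType) (d : nat).
Local Notation M := 'M[R[i]]_d.

Definition rank1 (B : M) := \rank B == 1%N.

Lemma rank1_sandwich (B X : M) : rank1 B -> exists k, B *m X *m B = k *: B.
Proof.
move=> /eqP rB.
suff : forall r (C : 'M[R[i]]_(d, r)) (W : 'M[R[i]]_(r, d)), r = 1%N -> C *m W = B ->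
    exists k, B *m X *m B = k *: B.
  by apply; [exact: rB | exact: mulmx_base].
move=> r C W r1; subst r => <-; set K := W *m X *m C; exists (K 0 0).
have -> : C *m W *m X *m (C *m W) = C *m K *m W by rewrite /K !mulmxA.
by rewrite {1}[K]mx11_scalar mul_mx_scalar -scalemxAl.
Qed.

Lemma rank1_sandwich_eigenvalue (B X : M) k : rank1 B -> B *m X *m B = k *: B ->
  eigenvalue (X *m B) k.
Proof.
move=> rB BXB; have B0 : B != 0 by rewrite -mxrank_eq0 (eqP rB).
have /existsP [i Bi] : [exists i, row i B != 0].
  apply: contraNT B0 => /existsPn Bi; apply/eqP/row_matrixP => i.
  by rewrite row0; apply/eqP; exact/negPn/Bi.
apply/eigenvalueP; exists (row i B) => //.
by rewrite -row_mul mulmxA BXB; apply/rowP => j; rewrite !mxE.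
Qed.

Definition rank1_once (w : seq M) := forall B, rank1 B -> (count (pred1 B) w <= 1)%N.

Lemma rank1_count_le (S w : seq M) : all (mem S) w -> rank1_once w ->
  (count rank1 w <= size S)%N.
Proof.
move=> wS w1; rewrite -size_filter; apply: uniq_leq_size => [|B]; last first.
  by rewrite mem_filter => /andP [_ /(allP wS)].
apply: count_mem_uniq => B; rewrite -has_pred1 has_count.
suff : (count (pred1 B) [seq C <- w | rank1 C] <= 1)%N by case: (count _ _) => [|[]].
rewrite count_filter; have [B1|B1] := boolP (rank1 B).
  by apply: leq_trans (w1 B B1); apply: sub_count => C /andP [].
rewrite (@eq_count _ _ pred0) ?count_pred0 // => C /=.
by apply/negbTE; apply: contraNN B1 => /andP [/eqP <-].
Qed.

End RankOne.

Arguments rank1 {R d} B.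

Lemma uniform_lt_seq (R : realDomainType) (T : eqType) (s : seq T) (P : T -> Prop)
    (h : T -> R) (t : R) :
  (forall x, x \in s -> P x -> h x < t) ->
  exists g, g < t /\ forall x, x \in s -> P x -> h x <= g.
Proof.
elim: s => [_|a s IH hs]; first by exists (t - 1); rewrite ltrBlDr ltrDl.
have [g [g_lt hg]] : exists g, g < t /\ forall x, x \in s -> P x -> h x <= g.
  by apply: IH => x xs; apply: hs; rewrite inE xs orbT.
have [Pa|Pa] := pselect (P a); last first.
  by exists g; split => // x; rewrite inE => /orP [/eqP -> //|]; exact: hg.
exists (Num.max g (h a)); split; first by rewrite gt_max g_lt hs ?mem_head.
move=> x; rewrite inE => /orP [/eqP -> _|xs Px]; first by rewrite le_max lexx orbT.
by rewrite le_max hg.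
Qed.

Lemma split_first (T : Type) (p : pred T) (w : seq T) :
  has p w -> exists X b Z, w = X ++ b :: Z /\ p b /\ ~~ has p X.
Proof.
elim: w => //= a w IH; case pa: (p a) => /= pw; first by exists [::], a, w.
have [X [b [Z [-> [pb nX]]]]] := IH pw.
by exists (a :: X), b, Z; rewrite /= pa.
Qed.

Lemma split_two (T : Type) (p : pred T) (w : seq T) :
  (1 < count p w)%N -> exists X a Y b Z, w = X ++ a :: Y ++ b :: Z /\ p a /\ p b.
Proof.
elim: w => //= a w IH; case pa: (p a) => /= cw.
  have /split_first [Y [b [Z [-> [pb _]]]]] : has p w by rewrite has_count.
  by exists [::], a, Y, b, Z.
have [X [a' [Y [b [Z [-> [pa' pb]]]]]]] := IH cw.
by exists (a :: X), a', Y, b, Z.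
Qed.

Section Reduction.
Variables (R : realType) (d : nat).
Local Notation M := 'M[R[i]]_d.

Lemma not_rank1_once_split (w : seq M) : ~ rank1_once w ->
  exists X B Y Z, w = X ++ B :: Y ++ B :: Z /\ rank1 B /\ rank1_once (rcons Y B).
Proof.
have [n le_w] := ubnP (size w); elim: n w le_w => // n IH w w_lt w_not.
have [B [B1 cB]] : exists B, rank1 B /\ (1 < count (pred1 B) w)%N.
  apply: contrapT => hn; apply: w_not => B B1; rewrite leqNgt.
  by apply/negP => cB; apply: hn; exists B.
have [X [a [Y [b [Z [ew [/eqP ea /eqP eb]]]]]]] := split_two cB; subst a b.
have [YB1|YB_not] := pselect (rank1_once (rcons Y B)); first by exists X, B, Y, Z.
have [|X' [B' [Y' [Z' [eYB [B'1 YB'1]]]]]] := IH _ _ YB_not.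
  by move: w_lt; rewrite ew size_rcons ?size_cat /= ?size_cat /=; lia.
exists (X ++ B :: X'), B', Y', (Z' ++ Z); split => //.
by rewrite ew -[Y ++ B :: Z]cat_rcons eYB -!catA /= -?catA /= -?catA.
Qed.

Lemma word_bound_by_count (p : pred M) (S : seq M) (K c D : R) :
  0 <= K -> 0 <= c -> 0 <= D ->
  (forall B, B \in S -> mxnorm B <= D * c) ->
  (forall X, all (mem S) X -> ~~ has p X -> mxnorm (mxprod X) <= K * c ^+ size X) ->
  forall w, all (mem S) w ->
    mxnorm (mxprod w) <= K ^+ (count p w).+1 * D ^+ count p w * c ^+ size w.
Proof.
move=> K_ge0 c_ge0 D_ge0 letter_bound free_bound w.
have [n le_w] := ubnP (size w); elim: n w le_w => // n IH w w_lt wS.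
have [pw|/negPf pw] := boolP (has p w); last first.
  move: (pw); rewrite has_count lt0n => /negbFE/eqP ->.
  by rewrite expr1 expr0 mulr1; apply: free_bound; rewrite ?pw.
have [X [B [Y [ew [pB nX]]]]] := split_first pw.
move: wS w_lt; rewrite ew all_cat /= => /andP [XS /andP [BS YS]] w_lt.
have {}IH : mxnorm (mxprod Y) <= K ^+ (count p Y).+1 * D ^+ count p Y * c ^+ size Y.
  by apply: IH YS; move: w_lt; rewrite size_cat /=; lia.
have cX : count p X = 0%N by apply/eqP; rewrite -leqn0 leqNgt -has_count.
rewrite count_cat cX /= pB add0n add1n mxprod_cat /= size_cat /=.
apply: le_trans (mxnormM _ _) _.
apply: le_trans (ler_pM (mxnorm_ge0 _) (mxnorm_ge0 _) (free_bound X XS nX) (mxnormM _ _)) _.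
apply: le_trans (ler_pM (mulr_ge0 K_ge0 (exprn_ge0 _ c_ge0))
  (mulr_ge0 (mxnorm_ge0 _) (mxnorm_ge0 _)) (le_refl _)
  (ler_pM (mxnorm_ge0 _) (mxnorm_ge0 _) (letter_bound B BS) IH)) _.
by rewrite exprD !exprS le_eqVlt; apply/orP; left; apply/eqP; ring.
Qed.

Lemma word_bound_of_rank1_returns (S : seq M) (K g : R) : 0 <= K -> 0 <= g ->
  (forall w, all (mem S) w -> rank1_once w -> mxnorm (mxprod w) <= K * g ^+ size w) ->
  (forall B Y k, B \in S -> rank1 B -> all (mem S) Y -> rank1_once (rcons Y B) ->
     B *m mxprod Y *m B = k *: B -> cabs k <= g ^+ (size Y).+1) ->
  forall w, all (mem S) w -> mxnorm (mxprod w) <= K * g ^+ size w.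
Proof.
move=> K_ge0 g_ge0 once_bound return_bound w.
have [n le_w] := ubnP (size w); elim: n w le_w => // n IH w w_lt wS.
have [w1|/not_rank1_once_split [X [B [Y [Z [ew [B1 YB1]]]]]]] := pselect (rank1_once w).
  exact: once_bound.
have [k BYB] := rank1_sandwich (mxprod Y) B1.
move: wS w_lt; rewrite ew !all_cat /= all_cat /=.
move=> /andP [XS /andP [BS /andP [YS /andP [_ ZS]]]] w_lt.
have -> : mxprod (X ++ B :: Y ++ B :: Z) = k *: mxprod (X ++ B :: Z).
  rewrite !mxprod_cat /= mxprod_cat /= scalemxAr; congr (_ *m _).
  by rewrite !mulmxA BYB scalemxAl.
apply: le_trans (mxnormZ _ _) _.
have XBZ : mxnorm (mxprod (X ++ B :: Z)) <= K * g ^+ size (X ++ B :: Z).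
  apply: IH; last by rewrite all_cat /= XS BS ZS.
  by move: w_lt; rewrite ?size_cat /= ?size_cat /=; lia.
apply: le_trans (ler_pM (cabs_ge0 _) (mxnorm_ge0 _) (return_bound B Y k BS B1 YS YB1 BYB) XBZ) _.
rewrite mulrCA -exprD ?size_cat /= ?size_cat /=.
by rewrite (_ : ((size Y).+1 + (size X + (size Z).+1))%N = (size X + (size Y + (size Z).+1).+1)%N) //; lia.
Qed.

End Reduction.

Section ExtremalWord.
Variables (R : realType) (d : nat).
Local Notation M := 'M[R[i]]_d.
Variable S : seq M.
Variables (c K0 : R).
Hypotheses (c_gt0 : 0 < c) (c_lt_jsr : c < jsr S) (K0_ge1 : 1 <= K0).
Hypothesis rank1_free_bound : forall w, all (mem S) w -> ~~ has rank1 w ->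
  mxnorm (mxprod w) <= K0 * c ^+ size w.

Lemma rank1_once_word_bound : exists K, 0 <= K /\
  forall w, all (mem S) w -> rank1_once w -> mxnorm (mxprod w) <= K * c ^+ size w.
Proof.
set D := 1 + \sum_(B <- S) mxnorm B / c.
have D_ge1 : 1 <= D.
  by rewrite lerDl sumr_ge0 // => B _; rewrite divr_ge0 ?mxnorm_ge0 ?ltW.
have letter_bound B : B \in S -> mxnorm B <= D * c.
  move=> BS; rewrite -ler_pdivrMr //; apply: ler_wpDl => //.
  exact: ler_term_sum (fun B => divr_ge0 (mxnorm_ge0 B) (ltW c_gt0)) BS.
have K0_ge0 := le_trans ler01 K0_ge1; have D_ge0 := le_trans ler01 D_ge1.
exists (K0 ^+ (size S).+1 * D ^+ size S); split; first by rewrite mulr_ge0 ?exprn_ge0.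
move=> w wS w1; apply: le_trans (word_bound_by_count K0_ge0 (ltW c_gt0) D_ge0
  letter_bound rank1_free_bound wS) _.
apply: ler_wpM2r; first by rewrite exprn_ge0 // ltW.
have w1S := rank1_count_le wS w1.
by apply: ler_pM; rewrite ?exprn_ge0 // ler_weXn2l.
Qed.

Hypothesis subextremal : forall w, all (mem S) w -> (0 < size w)%N -> rank1_once w ->
  specrad (mxprod w) < jsr S ^+ size w.

Lemma rank1_return_bound K : 0 <= K ->
  (forall w, all (mem S) w -> rank1_once w -> mxnorm (mxprod w) <= K * c ^+ size w) ->
  exists g, c <= g < jsr S /\
  forall B Y k, B \in S -> rank1 B -> all (mem S) Y -> rank1_once (rcons Y B) ->
    B *m mxprod Y *m B = k *: B -> cabs k <= g ^+ (size Y).+1.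
Proof.
move=> K_ge0 hK; set c2 := (c + jsr S) / 2.
have [c_c2 c2_t] := midf_lt c_lt_jsr.
have [Q hQ] := eventually_expr_dominates K (ltW c_gt0) c_c2.
set short := flatten [seq words S n | n <- iota 0 Q].
have [g1 [g1_t hg1]] : exists g1, g1 < jsr S /\ forall w, w \in short ->
    (0 < size w)%N /\ rank1_once w -> specrad (mxprod w) `^ (size w)%:R^-1 <= g1.
  apply: uniform_lt_seq.
  move=> w /flatten_mapP [n _ /wordsP [wS _]] [w_gt0 w1].
  rewrite -(ltr_pXn2r w_gt0) ?nnegrE ?powR_ge0 ?jsr_ge0 //.
  by rewrite exprn_powR_inv ?specrad_ge0 //; exact: subextremal.
set g := Num.max c2 g1.
have c2_g : c2 <= g by rewrite le_max lexx.
have g1_g : g1 <= g by rewrite le_max lexx orbT.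
have g_ge0 : 0 <= g by apply: le_trans c2_g; rewrite ltW // (lt_trans c_gt0).
exists g; split; first by rewrite (le_trans (ltW c_c2)) //= gt_max c2_t.
move=> B Y k BS B1 YS YB1 BYB.
have ek : eigenvalue (mxprod (rcons Y B)) k.
  by rewrite mxprod_rcons; exact: rank1_sandwich_eigenvalue.
have YBS : all (mem S) (rcons Y B) by rewrite all_rcons YS andbT; exact: BS.
rewrite -(size_rcons Y B); set n := size (rcons Y B).
have [Qn|nQ] := leqP Q n.
  apply: le_trans (eigenvalue_le_mxnorm ek) (le_trans (hK _ YBS YB1) _).
  rewrite mulrC; apply: le_trans (hQ _ Qn) _.
  by apply: lerXn2r; rewrite ?nnegrE ?g_ge0 // ltW // (lt_trans c_gt0).
have n_gt0 : (0 < n)%N by rewrite /n size_rcons.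
have short_YB : rcons Y B \in short.
  by apply/flatten_mapP; exists n; [rewrite mem_iota add0n | exact: mem_words].
apply: le_trans (cabs_le_specrad ek) _.
rewrite -(exprn_powR_inv (specrad_ge0 _) n_gt0) lerXn2r ?nnegrE ?powR_ge0 //.
exact: le_trans (hg1 _ short_YB (conj n_gt0 YB1)) g1_g.
Qed.

Lemma subextremal_absurd : False.
Proof.
have [K [K_ge0 hK]] := rank1_once_word_bound.
have [g [/andP [c_g g_lt] hret]] := rank1_return_bound K_ge0 hK.
have g_gt0 : 0 < g := lt_le_trans c_gt0 c_g.
have hKg w : all (mem S) w -> rank1_once w -> mxnorm (mxprod w) <= K * g ^+ size w.
  move=> wS w1; apply: le_trans (hK w wS w1) _; apply: ler_wpM2l => //.
  by apply: lerXn2r; rewrite ?nnegrE ?(ltW c_gt0) ?(ltW g_gt0).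
have := jsr_le_of_word_bound K_ge0 g_gt0
  (word_bound_of_rank1_returns K_ge0 (ltW g_gt0) hKg hret).
by rewrite leNgt g_lt.
Qed.

End ExtremalWord.

Lemma rank1_free_word_bound (R : realType) (d : nat) (S : seq 'M[R[i]]_d) (c K : R) :
  0 <= c -> 0 <= K ->
  (forall w, all (mem [seq B <- S | (2 <= \rank B)%N]) w ->
     mxnorm (mxprod w) <= K * c ^+ size w) ->
  forall w, all (mem S) w -> ~~ has rank1 w -> mxnorm (mxprod w) <= K * c ^+ size w.
Proof.
move=> c_ge0 K_ge0 high_bound w wS w1.
have [w0|w0] := boolP (0 \in w).
  by rewrite mxprod_eq0 // mxnorm0 mulr_ge0 ?exprn_ge0.
apply: high_bound; apply/allP => B Bw.
suff : B \in [seq B <- S | (2 <= \rank B)%N] by [].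
have BS : B \in S by exact: (allP wS).
rewrite mem_filter BS andbT.
have : B != 0 by apply: contraNneq w0 => <-.
have : ~~ rank1 B by apply: contra w1 => B1; apply/hasP; exists B.
by rewrite -mxrank_eq0 /rank1; case: (\rank B) => [|[|r]].
Qed.

Lemma exists_extremal_rank1_once_word (R : realType) (d : nat) (S : seq 'M[R[i]]_d) :
  S != [::] ->
  let H := [seq B <- S | (2 <= \rank B)%N] in (H = [::] \/ jsr H < jsr S) ->
  exists w, [/\ all (mem S) w, (0 < size w)%N, rank1_once w &
                jsr S ^+ size w <= specrad (mxprod w)].
Proof.
move=> S_neq0 H hH; have := jsr_ge0 S; rewrite le_eqVlt => /orP [/eqP t0|t_gt0].
  case: S S_neq0 {H hH} t0 => // B S _ t0; exists [:: B].
  split=> //=; first by rewrite mem_head.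
    by move=> C _ /=; case: (B == C).
  by rewrite -t0 expr1 specrad_ge0.
have H_lt : jsr H < jsr S by case: hH => [->|//]; rewrite jsr_nil.
set c := (jsr H + jsr S) / 2.
have [c_gt c_lt] := midf_lt H_lt.
have c_gt0 : 0 < c := le_lt_trans (jsr_ge0 H) c_gt.
have [K0 [K0_ge1 hK0]] := word_bound_of_gt_jsr c_gt0 c_gt.
have free := rank1_free_word_bound (ltW c_gt0) (le_trans ler01 K0_ge1) hK0.
apply: contrapT => no_ext; apply: (subextremal_absurd c_gt0 c_lt K0_ge1 free).
move=> w wS w_gt0 w1; rewrite ltNge; apply/negP => ext.
by apply: no_ext; exists w.
Qed.

Lemma all_mem_map_inv (T1 T2 : eqType) (f : T1 -> T2) (s : seq T1) (w : seq T2) :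
  all (mem [seq f x | x <- s]) w -> exists ks, w = [seq f x | x <- ks].
Proof.
elim: w => [|y w IH] /=; first by exists [::].
by case/andP => /mapP [x _ ->] /IH [ks ->]; exists (x :: ks).
Qed.

Unset Implicit Arguments.
Set Strict Implicit.

Theorem theorem1 (R : realType) (d l : nat) (A : 'I_l -> 'M[R[i]]_d) :
  (0 < l)%N ->
  let Aset := [seq A k | k <- enum 'I_l] in
  let Rset := [seq A k | k <- enum 'I_l & (2 <= \rank (A k))%N] in
  (Rset = [::] \/ jsr Rset < jsr Aset) ->
  exists (n : nat) (idx : n.-tuple 'I_l),
    (1 <= n)%N /\
    (forall k : 'I_l, \rank (A k) = 1%N ->
       (count (fun i => A i == A k) idx <= 1)%N) /\
    jsr Aset = specrad (mxprod [seq A i | i <- idx]) `^ (n%:R^-1).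
Proof.
move=> l_gt0 Aset Rset hR.
have Aset_neq0 : Aset != [::] by rewrite -size_eq0 size_map size_enum_ord -lt0n.
have RsetE : Rset = [seq B <- Aset | (2 <= \rank B)%N] by rewrite filter_map.
rewrite RsetE in hR.
have [w [wA w_gt0 w1 ext]] := exists_extremal_rank1_once_word Aset_neq0 hR.
have [ks wE] := all_mem_map_inv wA; subst w; rewrite size_map in w_gt0 ext.
have e : specrad (mxprod [seq A i | i <- ks]) = jsr Aset ^+ size ks.
  apply/eqP; rewrite eq_le ext andbT.
  by have := specrad_mxprod_le_jsr wA; rewrite size_map; apply.
exists (size ks), (in_tuple ks); split => //; split.
  by move=> k /eqP rk; have := w1 (A k) rk; rewrite count_map.
by rewrite /= e powR_exprn_inv // jsr_ge0.
Qed.
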